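(* Let $$\begin{aligned}p_4(k)=\;&582076609134674072265625k^{40}-347825698554515838623046875k^{38}\\&+100074581801891326904296875000k^{36}-18656729921698570251464843750000k^{34}\\&+2406402165103435516357421875000000k^{32}-223881811253170562744140625000000000k^{30}\\&+13463175828870323610839843750000000000k^{28}-546554928845186341347265625000000000000k^{26}\\&+44602844570033253018161875000000000000000k^{24}-5130242398470886015317438950000000000000000k^{22}\\&+805214383330095009369880969748800000000000000k^{20}+8091804003905867976154901735852032000000000000k^{18}\\&-262076670696960781271382283372767764480000000000k^{16}\\&+483089080872113925346827615868453187944448000000000k^{14}\\&+76133654804831682593043073614469922630706135040000000k^{12}\\&+4656778296665388277933286028092539858012767959121920000k^{10}\\&+144475786697302680271016689740018636544036558347226316800k^8\\&+2305862812061518538327375046497265994061106944720616030208k^6\\&+14131109130840787698067340120866948829204788093469111353344k^4\\&-27802797644590317388762803455393575731200000000000000000000k^2\\&+9774552621457470122500000000000000000000000000000000000000,\end{aligned}$$ and $$\begin{aligned}p_2(t)=\;&91750400t^{20}-857210880t^{19}+3560046592t^{18}-8616673280t^{17}+13364330496t^{16}\\&-13704527872t^{15}+9174425600t^{14}-3719282688t^{13}+689182720t^{12}+53528576t^{11}\\&-36429312t^{10}+533760t^9+207104t^8+75520t^7+32352t^6+11376t^5-320t^4\\&-104t^3-30t^2-7t-1.\end{aligned}$$ Let $k_0\approx 0.6898369707\in\left(\frac12,\frac{9}{13}\right)$ be the root of $p_4(k)=0$ in that interval, and let $t_1\approx 0.5194285605\in\left(\frac12,\frac35\right)$ be the root of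 $p_2(t)=0$ in that interval. If $k\le k_0$, then for every triangle $$p\ \ge\ 3\sqrt{3}\,r+k\left[1-\left(\frac{2r}{R}\right)^{5}\right]r.$$ Equality holds if and only if $a:b:c=1:1:1$ (for any $k\le k_0$), or $k=k_0$ and $a:b:c=2t_1:1:1$.
   Context: For a triangle $ABC$, $a,b,c$ denote the side lengths, $p=\frac{a+b+c}{2}$ the semi-perimeter, $R$ the circumradius and $r$ the inradius. *)

From Stdlib Require Import Reals Lra.
Open Scope R_scope.

Definition is_triangle (a b c : R) : Prop :=
  0 < a /\ 0 < b /\ 0 < c /\ a < b + c /\ b < c + a /\ c < a + b.

Definition semiper (a b c : R) : R := (a + b + c) / 2.

Definition area (a b c : R) : R :=
  let p := semiper a b c in sqrt (p * (p - a) * (p - b) * (p - c)).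

Definition inradius (a b c : R) : R := area a b c / semiper a b c.

Definition circumradius (a b c : R) : R := a * b * c / (4 * area a b c).

Definition p4 (k : R) : R :=
  582076609134674072265625 * k ^ 40
  - 347825698554515838623046875 * k ^ 38
  + 100074581801891326904296875000 * k ^ 36
  - 18656729921698570251464843750000 * k ^ 34
  + 2406402165103435516357421875000000 * k ^ 32
  - 223881811253170562744140625000000000 * k ^ 30
  + 13463175828870323610839843750000000000 * k ^ 28
  - 546554928845186341347265625000000000000 * k ^ 26
  + 44602844570033253018161875000000000000000 * k ^ 24
  - 5130242398470886015317438950000000000000000 * k ^ 22
  + 805214383330095009369880969748800000000000000 * k ^ 20
  + 8091804003905867976154901735852032000000000000 * k ^ 18
  - 262076670696960781271382283372767764480000000000 * k ^ 16
  + 483089080872113925346827615868453187944448000000000 * k ^ 14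
  + 76133654804831682593043073614469922630706135040000000 * k ^ 12
  + 4656778296665388277933286028092539858012767959121920000 * k ^ 10
  + 144475786697302680271016689740018636544036558347226316800 * k ^ 8
  + 2305862812061518538327375046497265994061106944720616030208 * k ^ 6
  + 14131109130840787698067340120866948829204788093469111353344 * k ^ 4
  - 27802797644590317388762803455393575731200000000000000000000 * k ^ 2
  + 9774552621457470122500000000000000000000000000000000000000.

Definition p2 (t : R) : R :=
  91750400 * t ^ 20 - 857210880 * t ^ 19 + 3560046592 * t ^ 18
  - 8616673280 * t ^ 17 + 13364330496 * t ^ 16
  - 13704527872 * t ^ 15 + 9174425600 * t ^ 14 - 3719282688 * t ^ 13
  + 689182720 * t ^ 12 + 53528576 * t ^ 11
  - 36429312 * t ^ 10 + 533760 * t ^ 9 + 207104 * t ^ 8 + 75520 * t ^ 7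
  + 32352 * t ^ 6 + 11376 * t ^ 5 - 320 * t ^ 4
  - 104 * t ^ 3 - 30 * t ^ 2 - 7 * t - 1.

(* a:b:c = 2t:1:1 up to relabelling of the sides (isosceles triangle whose
   base-to-leg ratio is 2t). *)
Definition ratio_2t11 (t a b c : R) : Prop :=
  (a = 2 * t * b /\ b = c) \/ (b = 2 * t * c /\ c = a) \/ (c = 2 * t * a /\ a = b).

From Stdlib Require Import Reals Lra Lia Psatz ZArith Znumtheory List Bool.
Import ListNotations.
Open Scope R_scope.

(* With the Ravi substitution a = y + z, b = z + x, c = x + y, the ratio p/r becomes
   sigma = sqrt (s^3 / xyz) with s = x + y + z, and 2r/R becomes
   q = 8xyz / ((x+y)(y+z)(z+x)), which we write as q = 8(3v^2-1)/(3v^2+1)^2 with v >= 1.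
   For fixed q the cubic with roots x, y, z has a nonnegative discriminant; this forces
   sigma >= 6 sqrt 3 v^3 / (3v^2-1), with equality only for isosceles triangles.  What is
   left is a one-variable inequality which factors as
   (v-1)^2 * W(v) * (sqrt 3 * phi(v) - k) >= 0 with W > 0 and phi = NUM/DEN rational.
   The derivative of phi has the sign of a polynomial g that increases on [1, oo), so phi
   is minimal exactly at the root w of g, and the best constant is sqrt 3 * phi(w).
   The substitution t = (3w^2-1)/(3w^2+1) turns g(w) = 0 into p2(t) = 0, and eliminating w
   between g(w) = 0 and K = 3 phi(w)^2 gives p4(sqrt K) = 0.  These eliminations and all
   sign conditions on polynomials are certified by exact integer computations (Taylor
   shifts, Moebius transforms and pseudo-remainders) checked by reflection. *)

Fixpoint pev (p : list Z) (x : R) : R :=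
  match p with [] => 0 | c :: p' => IZR c + x * pev p' x end.

Lemma pev_const c x : pev [c] x = IZR c.
Proof. simpl; ring. Qed.

Fixpoint padd (p q : list Z) : list Z :=
  match p, q with
  | [], _ => q
  | _, [] => p
  | a :: p', b :: q' => (a + b)%Z :: padd p' q'
  end.

Definition pscale (c : Z) (p : list Z) : list Z := map (Z.mul c) p.

Fixpoint pmul (p q : list Z) : list Z :=
  match p with [] => [] | a :: p' => padd (pscale a q) (0%Z :: pmul p' q) end.

Lemma pev_padd p q x : pev (padd p q) x = pev p x + pev q x.
Proof.
  revert q; induction p as [|a p IH]; intros [|b q]; simpl; try ring.
  rewrite plus_IZR, IH; ring.
Qed.

Lemma pev_pscale c p x : pev (pscale c p) x = IZR c * pev p x.
Proof. induction p as [|a p IH]; simpl; [ring|]. rewrite mult_IZR, IH; ring. Qed.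

Lemma pev_pmul p q x : pev (pmul p q) x = pev p x * pev q x.
Proof.
  induction p as [|a p IH]; simpl; [ring|].
  rewrite pev_padd, pev_pscale; simpl; rewrite IH; ring.
Qed.

Fixpoint pnorm (p : list Z) : list Z :=
  match p with
  | [] => []
  | c :: p' => match pnorm p' with [] => if Z.eqb c 0 then [] else [c] | q => c :: q end
  end.

Lemma pev_pnorm p x : pev (pnorm p) x = pev p x.
Proof.
  induction p as [|c p IH]; simpl; [reflexivity|].
  destruct (pnorm p) as [|d q]; rewrite <- IH; simpl; [|reflexivity].
  destruct (Z.eqb_spec c 0) as [->|_]; simpl; ring.
Qed.

(** * Vanishing modulo a polynomial *)

Definition pcontent (p : list Z) : Z := fold_right Z.gcd 0%Z p.

(* Dividing out the gcd keeps the numbers small: the scalings by the leading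
   coefficient of the modulus introduced by [prem] mostly cancel here. *)
Definition pnormalize (ms : Z * list Z) : Z * list Z :=
  let s := pnorm (snd ms) in
  let d := Z.gcd (fst ms) (pcontent s) in
  if Z.eqb d 0 then (fst ms, s) else (fst ms / d, map (fun c => c / d) s)%Z.

Definition mod_repr (g : list Z) (x v : R) (ms : Z * list Z) : Prop :=
  pev g x = 0 -> IZR (fst ms) * v = pev (snd ms) x.

Lemma pcontent_divide p c : In c p -> (pcontent p | c)%Z.
Proof.
  induction p as [|a p IH]; simpl; [tauto|].
  intros [<-|Hc]; [apply Z.gcd_divide_l|].
  apply (Z.divide_trans _ (pcontent p)); [apply Z.gcd_divide_r|auto].
Qed.

Lemma pev_map_div d p x : (0 < d)%Z -> (forall c, In c p -> (d | c)%Z) ->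
  pev p x = IZR d * pev (map (fun c => (c / d)%Z) p) x.
Proof.
  intros Hd; induction p as [|c p IH]; intros Hdiv; simpl; [ring|].
  rewrite IH by (intros; apply Hdiv; now right).
  rewrite (Zdivide_Zdiv_eq d c) at 1 by (auto; apply Hdiv; now left).
  rewrite mult_IZR; ring.
Qed.

Lemma mod_repr_pnormalize g x v ms : mod_repr g x v ms -> mod_repr g x v (pnormalize ms).
Proof.
  destruct ms as [m s]; unfold mod_repr, pnormalize; simpl; intros H Hg.
  rewrite <- (pev_pnorm s) in H; specialize (H Hg).
  set (d := Z.gcd m (pcontent (pnorm s))) in *.
  destruct (Z.eqb_spec d 0) as [_|Hd]; simpl; [exact H|].
  assert (Hd0 : (0 < d)%Z) by (pose proof (Z.gcd_nonneg m (pcontent (pnorm s))); lia).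
  assert (Hdiv : forall c, In c (pnorm s) -> (d | c)%Z).
  { intros c Hc; apply (Z.divide_trans _ (pcontent (pnorm s)));
      [apply Z.gcd_divide_r|now apply pcontent_divide]. }
  rewrite (pev_map_div d) in H by assumption.
  rewrite (Zdivide_Zdiv_eq d m), mult_IZR in H by (auto; apply Z.gcd_divide_l).
  apply (Rmult_eq_reg_l (IZR d)); [lra|apply not_0_IZR; lia].
Qed.

(* Pseudo-remainder by Horner's scheme: [prem g p = (m, s)] with [m * p = s] modulo [g];
   [(m * c) :: s] is [m * c + X * s], reduced by one multiple of [g] when it reaches the
   degree of [g]. *)
Fixpoint prem (g p : list Z) : Z * list Z :=
  match p with
  | [] => (1%Z, [])
  | c :: p' =>
      let (m, s) := prem g p' in
      let t := pnorm ((m * c)%Z :: s) in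
      let top := nth (pred (length g)) t 0%Z in
      if Z.eqb top 0 then (m, t)
      else ((last g 0%Z * m)%Z, pnorm (padd (pscale (last g 0%Z) t) (pscale (- top) g)))
  end.

Lemma prem_sound g p x : mod_repr g x (pev p x) (prem g p).
Proof.
  unfold mod_repr; induction p as [|c p IH]; intros Hg; [simpl; ring|].
  cbn [prem pev]; destruct (prem g p) as [m s]; simpl in IH; specialize (IH Hg).
  assert (Ht : pev (pnorm ((m * c)%Z :: s)) x = IZR m * (IZR c + x * pev p x)).
  { rewrite pev_pnorm; simpl; rewrite mult_IZR, <- IH; ring. }
  destruct (Z.eqb _ 0); cbn [fst snd].
  - now rewrite Ht.
  - rewrite pev_pnorm, pev_padd, !pev_pscale, Hg, Ht, mult_IZR; ring.
Qed.

Inductive pexpr : Type :=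
  | PEp : list Z -> pexpr
  | PEadd : pexpr -> pexpr -> pexpr
  | PEmul : pexpr -> pexpr -> pexpr.

Fixpoint pe_eval (e : pexpr) (x : R) : R :=
  match e with
  | PEp p => pev p x
  | PEadd e1 e2 => pe_eval e1 x + pe_eval e2 x
  | PEmul e1 e2 => pe_eval e1 x * pe_eval e2 x
  end.

Fixpoint pe_norm (e : pexpr) : list Z :=
  match e with
  | PEp p => p
  | PEadd e1 e2 => pnorm (padd (pe_norm e1) (pe_norm e2))
  | PEmul e1 e2 => pnorm (pmul (pe_norm e1) (pe_norm e2))
  end.

Fixpoint pe_mod (g : list Z) (e : pexpr) : Z * list Z :=
  match e with
  | PEp p => prem g p
  | PEadd e1 e2 =>
      let (m1, s1) := pe_mod g e1 in
      let (m2, s2) := pe_mod g e2 in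
      pnormalize ((m1 * m2)%Z, padd (pscale m2 s1) (pscale m1 s2))
  | PEmul e1 e2 =>
      let (m1, s1) := pe_mod g e1 in
      let (m2, s2) := pe_mod g e2 in
      let (m, s) := prem g (pmul s1 s2) in
      pnormalize ((m * m1 * m2)%Z, s)
  end.

Lemma pe_norm_sound e x : pev (pe_norm e) x = pe_eval e x.
Proof.
  induction e as [p|e1 IH1 e2 IH2|e1 IH1 e2 IH2]; simpl; [reflexivity|..];
    rewrite ?pev_pnorm, ?pev_padd, ?pev_pmul, ?IH1, ?IH2; ring.
Qed.

Lemma pe_mod_sound g e x : mod_repr g x (pe_eval e x) (pe_mod g e).
Proof.
  induction e as [p|e1 IH1 e2 IH2|e1 IH1 e2 IH2]; cbn [pe_mod pe_eval].
  - apply prem_sound.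
  - destruct (pe_mod g e1) as [m1 s1], (pe_mod g e2) as [m2 s2].
    apply mod_repr_pnormalize; intros Hg; unfold mod_repr in *; simpl in *.
    rewrite pev_padd, !pev_pscale, <- (IH1 Hg), <- (IH2 Hg), mult_IZR; ring.
  - destruct (pe_mod g e1) as [m1 s1], (pe_mod g e2) as [m2 s2].
    pose proof (prem_sound g (pmul s1 s2) x) as Hp.
    destruct (prem g (pmul s1 s2)) as [m s].
    apply mod_repr_pnormalize; intros Hg; unfold mod_repr in *; simpl in *.
    rewrite <- (Hp Hg), pev_pmul, <- (IH1 Hg), <- (IH2 Hg), !mult_IZR; ring.
Qed.

Definition vanishes_mod (g : list Z) (e : pexpr) : bool :=
  let (m, s) := pe_mod g e in negb (Z.eqb m 0) && match s with [] => true | _ => false end.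

Lemma vanishes_mod_sound g e x : vanishes_mod g e = true -> pev g x = 0 -> pe_eval e x = 0.
Proof.
  unfold vanishes_mod; pose proof (pe_mod_sound g e x) as H; unfold mod_repr in H.
  destruct (pe_mod g e) as [m [|c s]]; simpl in *; [|rewrite andb_false_r; discriminate].
  rewrite andb_true_r; intros Hm Hg; apply negb_true_iff, Z.eqb_neq in Hm.
  specialize (H Hg); apply Rmult_integral in H as [H|H]; [apply eq_IZR in H; lia|exact H].
Qed.

Fixpoint pe_pow (e : pexpr) (n : nat) : pexpr :=
  match n with O => PEp [1%Z] | S n' => PEmul e (pe_pow e n') end.

Fixpoint pe_hom (p : list Z) (N D : pexpr) : pexpr :=
  match p with
  | [] => PEp []
  | c :: p' => PEadd (PEmul (PEp [c]) (pe_pow D (length p'))) (PEmul N (pe_hom p' N D))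
  end.

Lemma pe_pow_sound e n x : pe_eval (pe_pow e n) x = pe_eval e x ^ n.
Proof. induction n as [|n IH]; simpl; rewrite ?IH; ring. Qed.

Lemma pe_hom_sound p N D x : pe_eval D x <> 0 ->
  pe_eval (pe_hom p N D) x * pe_eval D x
  = pe_eval D x ^ length p * pev p (pe_eval N x / pe_eval D x).
Proof.
  intros HD; induction p as [|c p IH]; [simpl; ring|].
  cbn [pe_hom pe_eval pev length]; rewrite pe_pow_sound.
  transitivity (IZR c * pe_eval D x ^ S (length p)
                + pe_eval N x * (pe_eval (pe_hom p N D) x * pe_eval D x));
    [simpl; ring|rewrite IH; simpl; field; exact HD].
Qed.

(** * Sign certificates *)

Definition pos_coeffs (p : list Z) : bool :=
  match p with [] => false | c :: p' => Z.ltb 0 c && forallb (Z.ltb 0) p' end.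

Definition incr_coeffs (p : list Z) : bool :=
  match p with [] => false | _ :: p' => pos_coeffs p' end.

Lemma pev_nonneg_mono p x y : forallb (Z.ltb 0) p = true -> 0 <= x <= y ->
  0 <= pev p x <= pev p y.
Proof.
  intros Hp Hxy; induction p as [|c p IH]; simpl in *; [lra|].
  apply andb_true_iff in Hp as [Hc Hp]; apply Z.ltb_lt, IZR_lt in Hc.
  destruct (IH Hp) as [H0 H1].
  assert (x * pev p x <= y * pev p y) by (apply Rmult_le_compat; lra).
  split; [assert (0 <= x * pev p x) by (apply Rmult_le_pos; lra)|]; lra.
Qed.

Lemma pos_coeffs_forallb p : pos_coeffs p = true -> forallb (Z.ltb 0) p = true.
Proof. destruct p; simpl; [discriminate|tauto]. Qed.

Lemma pev_pos p x : pos_coeffs p = true -> 0 <= x -> 0 < pev p x.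
Proof.
  destruct p as [|c p]; simpl; [discriminate|].
  intros Hp Hx; apply andb_true_iff in Hp as [Hc Hp]; apply Z.ltb_lt, IZR_lt in Hc.
  destruct (pev_nonneg_mono p x x Hp) as [H _]; [lra|].
  assert (0 <= x * pev p x) by (apply Rmult_le_pos; lra); lra.
Qed.

Lemma pev_incr p x y : incr_coeffs p = true -> 0 <= x < y -> pev p x < pev p y.
Proof.
  destruct p as [|c p]; simpl; [discriminate|].
  intros Hp Hxy.
  pose proof (pev_pos p y Hp ltac:(lra)) as Hy.
  destruct (pev_nonneg_mono p x y (pos_coeffs_forallb p Hp)) as [Hx Hm]; [lra|].
  assert (x * pev p x <= x * pev p y) by (apply Rmult_le_compat_l; lra).
  nra.
Qed.

Definition pshift1 (p : list Z) : list Z :=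
  pe_norm (pe_hom p (PEp [1; 1]%Z) (PEp [1%Z])).

Lemma pev_pshift1 p s : pev (pshift1 p) s = pev p (1 + s).
Proof.
  unfold pshift1; rewrite pe_norm_sound.
  pose proof (pe_hom_sound p (PEp [1; 1]%Z) (PEp [1%Z]) s) as H; simpl in H.
  rewrite Rmult_0_r, Rplus_0_r, pow1, !Rmult_1_r, Rdiv_1_r, Rmult_1_l in H by lra.
  apply H, R1_neq_R0.
Qed.

Lemma pos_on_ge1 p x : pos_coeffs (pshift1 p) = true -> 1 <= x -> 0 < pev p x.
Proof.
  intros Hp Hx; replace x with (1 + (x - 1)) by ring.
  rewrite <- pev_pshift1; apply pev_pos; [exact Hp|lra].
Qed.

Lemma incr_on_ge1 p x y : incr_coeffs (pshift1 p) = true -> 1 <= x < y -> pev p x < pev p y.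
Proof.
  intros Hp Hxy; replace x with (1 + (x - 1)) by ring; replace y with (1 + (y - 1)) by ring.
  rewrite <- !pev_pshift1; apply pev_incr; [exact Hp|lra].
Qed.

(* [K = (a + b m) / (d + d m)] maps [0 < m] onto the open interval between [a/d] and [b/d]. *)
Definition pmoebius (a b d : Z) (p : list Z) : list Z :=
  pe_norm (pe_hom p (PEp [a; b]) (PEp [d; d])).

Lemma pev_pmoebius a b d p K : (0 < d)%Z ->
  0 < (IZR d * K - IZR a) * (IZR b - IZR d * K) ->
  let m := (IZR d * K - IZR a) / (IZR b - IZR d * K) in
  0 < m /\ exists D, 0 < D /\ pev (pmoebius a b d p) m * D = D ^ length p * pev p K.
Proof.
  intros Hd HK m; apply IZR_lt in Hd.
  assert (Hb : IZR b - IZR d * K <> 0) by (intro E; rewrite E in HK; lra).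
  assert (Hm : 0 < m).
  { unfold m; replace ((IZR d * K - IZR a) / (IZR b - IZR d * K))
      with ((IZR d * K - IZR a) * (IZR b - IZR d * K) / (IZR b - IZR d * K) ^ 2)
      by (field; exact Hb).
    apply Rdiv_lt_0_compat; [exact HK|rewrite <- Rsqr_pow2; apply Rsqr_pos_lt, Hb]. }
  split; [exact Hm|exists (pe_eval (PEp [d; d]) m); split; [simpl; nra|]].
  unfold pmoebius; rewrite pe_norm_sound.
  rewrite (pe_hom_sound p _ (PEp [d; d])) by (simpl; nra); simpl.
  replace ((IZR a + m * (IZR b + m * 0)) / (IZR d + m * (IZR d + m * 0))) with K;
    [reflexivity|].
  assert (Hab : IZR b - IZR a <> 0)
    by (intro E; replace (IZR a) with (IZR b) in HK by lra; nra).
  unfold m; field; split; [exact Hb|].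
  intro E; apply Hab, (Rmult_eq_reg_l (IZR d)); [nra|lra].
Qed.

Lemma moebius_pos a b d p K : (0 < d)%Z -> pos_coeffs (pmoebius a b d p) = true ->
  0 < (IZR d * K - IZR a) * (IZR b - IZR d * K) -> 0 < pev p K.
Proof.
  intros Hd Hp HK; destruct (pev_pmoebius a b d p K Hd HK) as [Hm [D [HD E]]].
  pose proof (pev_pos _ _ Hp (Rlt_le _ _ Hm)) as H.
  assert (0 < D ^ length p) by (apply pow_lt; exact HD).
  nra.
Qed.

Lemma moebius_root_unique a b d p K0 K1 : (0 < d)%Z -> incr_coeffs (pmoebius a b d p) = true ->
  0 < (IZR d * K0 - IZR a) * (IZR b - IZR d * K0) ->
  0 < (IZR d * K1 - IZR a) * (IZR b - IZR d * K1) ->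
  pev p K0 = 0 -> pev p K1 = 0 -> K0 = K1.
Proof.
  intros Hd Hp H0 H1 Z0 Z1.
  destruct (pev_pmoebius a b d p K0 Hd H0) as [Hm0 [D0 [HD0 E0]]].
  destruct (pev_pmoebius a b d p K1 Hd H1) as [Hm1 [D1 [HD1 E1]]].
  rewrite Z0, Rmult_0_r in E0; rewrite Z1, Rmult_0_r in E1.
  apply Rmult_integral in E0 as [E0|]; [|lra]; apply Rmult_integral in E1 as [E1|]; [|lra].
  set (m0 := (IZR d * K0 - IZR a) / (IZR b - IZR d * K0)) in *.
  set (m1 := (IZR d * K1 - IZR a) / (IZR b - IZR d * K1)) in *.
  assert (Hm : m0 = m1).
  { destruct (Rtotal_order m0 m1) as [Hlt|[Heq|Hlt]]; [|exact Heq|];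
      [pose proof (pev_incr _ m0 m1 Hp ltac:(lra))
      |pose proof (pev_incr _ m1 m0 Hp ltac:(lra))]; lra. }
  apply IZR_lt in Hd.
  assert (B0 : IZR b - IZR d * K0 <> 0) by (intro E; rewrite E in H0; lra).
  assert (B1 : IZR b - IZR d * K1 <> 0) by (intro E; rewrite E in H1; lra).
  assert (E0' : IZR d * K0 - IZR a = m0 * (IZR b - IZR d * K0)) by (unfold m0; field; exact B0).
  assert (E1' : IZR d * K1 - IZR a = m1 * (IZR b - IZR d * K1)) by (unfold m1; field; exact B1).
  rewrite <- Hm in E1'.
  assert (E : (1 + m0) * (IZR d * (K0 - K1)) = 0) by lra.
  apply Rmult_integral in E as [E|E]; [lra|].
  apply Rmult_integral in E as [E|E]; lra.
Qed.

Fixpoint dpev (p : list Z) (x : R) : R :=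
  match p with [] => 0 | _ :: p' => pev p' x + x * dpev p' x end.

Lemma pev_deriv p x : derivable_pt_lim (pev p) x (dpev p x).
Proof.
  revert x; induction p as [|c p IH]; intros x; simpl.
  - exact (derivable_pt_lim_const 0 x).
  - pose proof (derivable_pt_lim_plus _ _ x _ _ (derivable_pt_lim_const (IZR c) x)
      (derivable_pt_lim_mult id (pev p) x _ _ (derivable_pt_lim_id x) (IH x))) as H.
    replace (pev p x + x * dpev p x) with (0 + (1 * pev p x + id x * dpev p x))
      by (unfold id; ring).
    exact H.
Qed.

Lemma strict_min_of_deriv_sign (f f' : R -> R) (a w : R) :
  a <= w ->
  (forall x, a <= x -> derivable_pt_lim f x (f' x)) ->
  (forall x, a <= x < w -> f' x < 0) ->
  (forall x, w < x -> 0 < f' x) ->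
  forall v, a <= v -> f w <= f v /\ (f v = f w -> v = w).
Proof.
  intros Haw Hd Hneg Hpos v Hv.
  destruct (Rtotal_order v w) as [Hlt|[->|Hlt]]; [| split; [lra|auto] |].
  - destruct (MVT_cor2 f f' v w Hlt (fun c Hc => Hd c ltac:(lra))) as [c [E Hc]].
    pose proof (Hneg c ltac:(lra)). assert (f' c * (w - v) < 0) by nra. split; [lra|intros; lra].
  - destruct (MVT_cor2 f f' w v Hlt (fun c Hc => Hd c ltac:(lra))) as [c [E Hc]].
    pose proof (Hpos c ltac:(lra)). assert (0 < f' c * (v - w)) by nra. split; [lra|intros; lra].
Qed.

Definition gL : list Z := [
  (-163840); (-502443); 1933311; 6946803; (-7580367); (-37224684); 6487452; 94063356;
  26437428; (-103501962); (-56876094); 22950378; 16538094; 11363652; 7427052; 4487724;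
  2545668; 1240029; 570807; 177147; 59049]%Z.
Definition hL : list Z := [
  0; 6; 6; 162; 162; 1944; 1944; 13608; 13608; 61236; 61236; 183708; 183708; 367416;
  367416; 472392; 472392; 354294; 354294; 118098; 118098]%Z.
Definition numL : list Z := [
  1; 2; 30; 60; 405; 810; 3240; 6480; 17010; 34020; 61236; 122472; 153090; 306180;
  262440; 524880; 295245; 590490; 196830; 393660; 59049; 118098]%Z.
Definition denL : list Z := [
  (-10923); (-21846); 163830; 349506; (-939483); (-2228472); 2380104; 6988680;
  (-1676214); (-10341108); (-3084156); 4172796; 3477330; 2781864; 2152008; 1522152;
  1056321; 590490; 354294; 118098; 59049]%Z.
(* [psiL / 1280] is the remainder of [numL / denL] modulo [gL] (extended Euclidean
   algorithm over Q); [phi_eq_psi_mod_g] checks it. *)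
Definition psiL : list Z := [
  1470720; 2064131; (-20512764); (-27337617); 110887056; 139303800; (-284096160);
  (-331347024); 320725008; 334038006; (-78469560); (-57580794); (-39995856); (-26943840);
  (-16376256); (-9815256); (-4723920); (-2421009); (-708588); (-295245)]%Z.
Definition p4L : list Z := [
  9774552621457470122500000000000000000000000000000000000000;
  (-27802797644590317388762803455393575731200000000000000000000);
  14131109130840787698067340120866948829204788093469111353344;
  2305862812061518538327375046497265994061106944720616030208;
  144475786697302680271016689740018636544036558347226316800;
  4656778296665388277933286028092539858012767959121920000;
  76133654804831682593043073614469922630706135040000000;
  483089080872113925346827615868453187944448000000000;
  (-262076670696960781271382283372767764480000000000);
  8091804003905867976154901735852032000000000000;
  805214383330095009369880969748800000000000000;
  (-5130242398470886015317438950000000000000000);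
  44602844570033253018161875000000000000000; (-546554928845186341347265625000000000000);
  13463175828870323610839843750000000000; (-223881811253170562744140625000000000);
  2406402165103435516357421875000000; (-18656729921698570251464843750000);
  100074581801891326904296875000; (-347825698554515838623046875);
  582076609134674072265625]%Z.

Definition phi (v : R) : R := pev numL v / pev denL v.

Lemma p4_pev k : p4 k = pev p4L (k ^ 2).
Proof. unfold p4, p4L; cbn [pev]; ring. Qed.

Lemma numL_eq v : pev numL v = (2 * v + 1) * (3 * v ^ 2 + 1) ^ 10.
Proof. unfold numL; cbn [pev]; ring. Qed.

Lemma phi_deriv_num v :
  dpev numL v * pev denL v - dpev denL v * pev numL v = pev gL v * pev hL v.
Proof. unfold numL, denL, gL, hL; cbn [dpev pev]; ring. Qed.

Lemma den_pos v : 1 <= v -> 0 < pev denL v.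
Proof. apply pos_on_ge1; vm_compute; reflexivity. Qed.

Lemma h_pos v : 1 <= v -> 0 < pev hL v.
Proof. apply pos_on_ge1; vm_compute; reflexivity. Qed.

Lemma g_incr v v' : 1 <= v < v' -> pev gL v < pev gL v'.
Proof. apply incr_on_ge1; vm_compute; reflexivity. Qed.

Lemma phi_gt_29_100 v : 1 <= v -> 29 / 100 < phi v.
Proof.
  intros Hv; pose proof (den_pos v Hv) as Hd.
  assert (H : 0 < pev (padd (pscale 100 numL) (pscale (-29) denL)) v)
    by (apply pos_on_ge1; [vm_compute; reflexivity|exact Hv]).
  rewrite pev_padd, !pev_pscale in H.
  unfold phi; apply Rmult_lt_reg_r with (pev denL v); [lra|].
  field_simplify; [|lra]. lra.
Qed.

Lemma phi_103_bound : 3 * phi (103 / 100) ^ 2 < 81 / 169.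
Proof. unfold phi, numL, denL; cbn [pev]; lra. Qed.

Lemma phi_deriv v : 1 <= v ->
  derivable_pt_lim phi v (pev gL v * pev hL v / (pev denL v)²).
Proof.
  intros Hv; rewrite <- phi_deriv_num.
  exact (derivable_pt_lim_div _ _ v _ _ (pev_deriv numL v) (pev_deriv denL v)
    (Rgt_not_eq _ _ (den_pos v Hv))).
Qed.

Lemma phi_strict_min w : 1 <= w -> pev gL w = 0 ->
  forall v, 1 <= v -> phi w <= phi v /\ (phi v = phi w -> v = w).
Proof.
  intros Hw Hg; apply (strict_min_of_deriv_sign phi _ 1 w Hw phi_deriv).
  - intros x Hx; pose proof (g_incr x w Hx); pose proof (h_pos x ltac:(lra)).
    pose proof (den_pos x ltac:(lra)).
    apply Rdiv_neg_pos; [nra|unfold Rsqr; nra].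
  - intros x Hx; pose proof (g_incr w x ltac:(lra)); pose proof (h_pos x ltac:(lra)).
    pose proof (den_pos x ltac:(lra)).
    apply Rdiv_lt_0_compat; [nra|unfold Rsqr; nra].
Qed.

Definition v_of_t (t : R) : R := sqrt ((1 + t) / (3 * (1 - t))).

Lemma v_of_t_spec t : 1/2 < t < 3/5 ->
  1 < v_of_t t < 6/5 /\ 3 * v_of_t t ^ 2 = (1 + t) / (1 - t).
Proof.
  intros Ht.
  assert (Hsq : v_of_t t ^ 2 = (1 + t) / (3 * (1 - t))).
  { unfold v_of_t; rewrite <- Rsqr_pow2; apply Rsqr_sqrt, Rlt_le, Rdiv_lt_0_compat; lra. }
  assert (H1 : 0 < v_of_t t ^ 2 - 1).
  { replace (v_of_t t ^ 2 - 1) with ((4 * t - 2) / (3 * (1 - t))) by (rewrite Hsq; field; lra).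
    apply Rdiv_lt_0_compat; lra. }
  assert (H2 : 0 < (6/5) ^ 2 - v_of_t t ^ 2).
  { replace ((6/5) ^ 2 - v_of_t t ^ 2) with ((83 - 133 * t) / (75 * (1 - t)))
      by (rewrite Hsq; field; lra).
    apply Rdiv_lt_0_compat; lra. }
  assert (0 <= v_of_t t) by apply sqrt_pos.
  split; [split; nra|rewrite Hsq; field; lra].
Qed.

Lemma p2_g_factor v :
  p2 ((3 * v ^ 2 - 1) / (3 * v ^ 2 + 1)) * (3 * v ^ 2 + 1) ^ 20 * 59049 ^ 2
  = 6973568802 * pev gL v * pev gL (- v).
Proof.
  unfold p2, gL; cbn [pev]; field.
  assert (0 <= v ^ 2) by apply pow2_ge_0; lra.
Qed.

Lemma g_opp_neg v : 1 < v < 6/5 -> pev gL (- v) < 0.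
Proof.
  intros Hv.
  assert (H : 0 < pev (pscale (-1) gL) (- v)).
  { apply (moebius_pos (-6) (-5) 5); [lia|vm_compute; reflexivity|].
    nra. }
  rewrite pev_pscale in H; lra.
Qed.

Lemma g_root_v_of_t t : 1/2 < t < 3/5 -> p2 t = 0 -> pev gL (v_of_t t) = 0.
Proof.
  intros Ht Hp; destruct (v_of_t_spec t Ht) as [Hv Hv2].
  pose proof (p2_g_factor (v_of_t t)) as E.
  replace ((3 * v_of_t t ^ 2 - 1) / (3 * v_of_t t ^ 2 + 1)) with t in E
    by (rewrite Hv2; field; lra).
  rewrite Hp in E; pose proof (g_opp_neg _ Hv).
  assert (Hprod : pev gL (v_of_t t) * pev gL (- v_of_t t) = 0) by lra.
  apply Rmult_integral in Hprod as [|]; lra.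
Qed.

Lemma phi_eq_psi_mod_g w : 1 <= w -> pev gL w = 0 -> phi w = pev psiL w / 1280.
Proof.
  intros Hw Hg; pose proof (den_pos w Hw).
  assert (E : pe_eval (PEadd (PEmul (PEp denL) (PEp psiL)) (PEmul (PEp [(-1280)%Z]) (PEp numL))) w = 0)
    by (apply (vanishes_mod_sound gL); [vm_compute; reflexivity|exact Hg]).
  cbn [pe_eval] in E; rewrite pev_const in E.
  unfold phi; field_simplify_eq; lra.
Qed.

Lemma p4L_root_psi w : pev gL w = 0 -> pev p4L (3 * (pev psiL w / 1280) ^ 2) = 0.
Proof.
  intros Hg.
  set (N := PEmul (PEp [3%Z]) (PEmul (PEp psiL) (PEp psiL))).
  assert (E : pe_eval (pe_hom p4L N (PEp [1638400%Z])) w = 0)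
    by (apply (vanishes_mod_sound gL); [vm_cast_no_check (eq_refl true)|exact Hg]).
  pose proof (pe_hom_sound p4L N (PEp [1638400%Z]) w ltac:(simpl; lra)) as H.
  rewrite E in H; unfold N in H; cbn [pe_eval] in H; rewrite !pev_const in H.
  replace (3 * (pev psiL w / 1280) ^ 2) with (3 * (pev psiL w * pev psiL w) / 1638400) by field.
  pose proof (pow_lt 1638400 (length p4L) ltac:(lra)).
  symmetry in H; rewrite Rmult_0_l in H; apply Rmult_integral in H as [|]; [lra|assumption].
Qed.

Lemma p4L_root_unique K0 K1 : 1/4 < K0 < 81/169 -> 1/4 < K1 < 81/169 ->
  pev p4L K0 = 0 -> pev p4L K1 = 0 -> K0 = K1.
Proof.
  intros H0 H1; apply (moebius_root_unique 324 169 676); [lia|vm_compute; reflexivity|nra|nra].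
Qed.

(** * The isosceles extremal problem *)

Definition qv (v : R) : R := 8 * (3 * v ^ 2 - 1) / (3 * v ^ 2 + 1) ^ 2.

Definition sigma_iso (v : R) : R := 6 * sqrt 3 * v ^ 3 / (3 * v ^ 2 - 1).

Definition iso_weight (v : R) : R := 3 * pev denL v / ((3 * v ^ 2 - 1) * (3 * v ^ 2 + 1) ^ 10).

Lemma iso_weight_pos v : 1 <= v -> 0 < iso_weight v.
Proof.
  intros Hv; pose proof (den_pos v Hv); unfold iso_weight.
  apply Rdiv_lt_0_compat; [lra|apply Rmult_lt_0_compat; [nra|apply pow_lt; nra]].
Qed.

Lemma sigma_iso_decomp k v : 1 <= v ->
  sigma_iso v - 3 * sqrt 3 - k * (1 - qv v ^ 5)
  = (v - 1) ^ 2 * iso_weight v * (sqrt 3 * phi v - k).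
Proof.
  intros Hv; pose proof (den_pos v Hv).
  assert (E : 1 - qv v ^ 5 = (v - 1) ^ 2 * iso_weight v).
  { unfold iso_weight, qv, denL; cbn [pev]; field; nra. }
  rewrite E; unfold iso_weight, sigma_iso, phi; rewrite numL_eq; field; nra.
Qed.

Lemma pos_eq_iff_sq a b : 0 < a -> 0 < b -> (a = b <-> a ^ 2 = b ^ 2).
Proof.
  intros Ha Hb; split; [intros ->; reflexivity|intros E].
  assert (F : (a - b) * (a + b) = 0) by (ring_simplify; lra).
  apply Rmult_integral in F as [|]; lra.
Qed.

Lemma sigma_iso_spec v : 1 <= v ->
  0 < sigma_iso v /\ sigma_iso v ^ 2 = 108 * v ^ 6 / (3 * v ^ 2 - 1) ^ 2.
Proof.
  intros Hv; assert (S3 : sqrt 3 * sqrt 3 = 3) by (apply sqrt_sqrt; lra).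
  pose proof (sqrt_lt_R0 3 ltac:(lra)).
  unfold sigma_iso; split.
  - apply Rdiv_lt_0_compat; [apply Rmult_lt_0_compat; [lra|apply pow_lt; lra]|nra].
  - replace ((6 * sqrt 3 * v ^ 3 / (3 * v ^ 2 - 1)) ^ 2)
      with (36 * (sqrt 3 * sqrt 3) * v ^ 6 / (3 * v ^ 2 - 1) ^ 2) by (field; nra).
    rewrite S3; field; nra.
Qed.

Lemma exists_qv q : 0 < q <= 1 -> exists v, 1 <= v /\ q = qv v.
Proof.
  intros Hq.
  set (Y := 4 * (1 + sqrt (1 - q)) / q).
  assert (HD : sqrt (1 - q) * sqrt (1 - q) = 1 - q) by (apply sqrt_sqrt; lra).
  pose proof (sqrt_pos (1 - q)).
  assert (HY : 4 <= Y).
  { unfold Y; apply (Rmult_le_reg_r q); [lra|]; field_simplify; [|lra]; nra. }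
  assert (HqY : q * Y ^ 2 = 8 * Y - 16).
  { assert (E : q * Y ^ 2 - (8 * Y - 16) = 16 * (sqrt (1 - q) * sqrt (1 - q) - (1 - q)) / q)
      by (unfold Y; field; lra).
    rewrite HD, Rminus_diag, Rmult_0_r, Rdiv_0_l in E; lra. }
  exists (sqrt ((Y - 1) / 3)).
  assert (Hv : sqrt ((Y - 1) / 3) ^ 2 = (Y - 1) / 3)
    by (rewrite <- Rsqr_pow2; apply Rsqr_sqrt; lra).
  split.
  - pose proof (sqrt_pos ((Y - 1) / 3)); nra.
  - unfold qv; rewrite Hv; apply (Rmult_eq_reg_r (Y ^ 2)); [|nra].
    rewrite HqY; field; lra.
Qed.

(** * Triangles in Ravi coordinates *)

Definition ravi_q (x y z : R) : R := 8 * (x * y * z) / ((x + y) * (y + z) * (z + x)).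

Definition ravi_sigma (x y z : R) : R := (x + y + z) ^ 2 / sqrt ((x + y + z) * x * y * z).

Lemma ravi_rot x y z : ravi_q x y z = ravi_q y z x /\ ravi_sigma x y z = ravi_sigma y z x.
Proof.
  unfold ravi_q, ravi_sigma; split.
  - f_equal; ring.
  - f_equal; [ring|f_equal; ring].
Qed.

Lemma ravi_q_bounds x y z : 0 < x -> 0 < y -> 0 < z ->
  0 < ravi_q x y z <= 1 /\ (ravi_q x y z = 1 -> x = y /\ y = z).
Proof.
  intros Hx Hy Hz; unfold ravi_q.
  assert (HP : 0 < (x + y) * (y + z) * (z + x)) by (repeat apply Rmult_lt_0_compat; lra).
  assert (E : (x + y) * (y + z) * (z + x) - 8 * (x * y * z)
              = x * (y - z) ^ 2 + y * (z - x) ^ 2 + z * (x - y) ^ 2) by ring.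
  assert (0 <= x * (y - z) ^ 2) by (apply Rmult_le_pos; [lra|apply pow2_ge_0]).
  assert (0 <= y * (z - x) ^ 2) by (apply Rmult_le_pos; [lra|apply pow2_ge_0]).
  assert (0 <= z * (x - y) ^ 2) by (apply Rmult_le_pos; [lra|apply pow2_ge_0]).
  split; [split|intros Hq1].
  - apply Rdiv_lt_0_compat; [|exact HP]; repeat apply Rmult_lt_0_compat; lra.
  - apply Rmult_le_reg_r with ((x + y) * (y + z) * (z + x)); [exact HP|].
    unfold Rdiv; rewrite Rmult_assoc, Rinv_l; lra.
  - assert (E1 : 8 * (x * y * z) = (x + y) * (y + z) * (z + x))
      by (rewrite <- Rmult_1_l; rewrite <- Hq1; field; lra).
    assert (Ex : x * (y - z) ^ 2 = 0) by lra; assert (Ez : z * (x - y) ^ 2 = 0) by lra.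
    apply Rmult_integral in Ex as [|Ex]; [lra|]; apply Rmult_integral in Ez as [|Ez]; [lra|].
    simpl in Ex, Ez.
    split; nra.
Qed.

Lemma ravi_sigma_spec x y z : 0 < x -> 0 < y -> 0 < z ->
  0 < ravi_sigma x y z /\ ravi_sigma x y z ^ 2 = (x + y + z) ^ 3 / (x * y * z).
Proof.
  intros Hx Hy Hz; unfold ravi_sigma.
  assert (H : 0 < (x + y + z) * x * y * z) by (repeat apply Rmult_lt_0_compat; lra).
  pose proof (sqrt_lt_R0 _ H) as Hs; pose proof (sqrt_sqrt _ (Rlt_le _ _ H)) as Hss.
  split.
  - apply Rdiv_lt_0_compat; [apply pow_lt; lra|exact Hs].
  - replace (((x + y + z) ^ 2 / sqrt ((x + y + z) * x * y * z)) ^ 2)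
      with ((x + y + z) ^ 4 / (sqrt ((x + y + z) * x * y * z) * sqrt ((x + y + z) * x * y * z)))
      by (field; lra).
    rewrite Hss; field; repeat split; lra.
Qed.

Lemma cubic_disc_bound x y z Y : 0 < x -> 0 < y -> 0 < z -> 4 <= Y ->
  (x + y + z) * (x * y + y * z + z * x) * (Y - 2) = x * y * z * (Y + 2) * (Y - 1) ->
  0 <= (x + y + z) ^ 3 * (Y - 2) ^ 2 - 4 * (Y - 1) ^ 3 * (x * y * z) /\
  ((x + y + z) ^ 3 * (Y - 2) ^ 2 - 4 * (Y - 1) ^ 3 * (x * y * z) = 0 ->
   (x - y) * (y - z) * (z - x) = 0).
Proof.
  intros Hx Hy Hz HY Hrel.
  set (s := x + y + z) in *; set (e3 := x * y * z) in *.
  set (A := s ^ 3 * (Y - 2) ^ 2 - 4 * (Y - 1) ^ 3 * e3).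
  set (B := 4 * (Y - 2) * s ^ 3 - (Y + 2) ^ 3 * e3).
  (* the discriminant of the cubic with roots x, y, z, simplified with Hrel *)
  assert (HD : ((x - y) * (y - z) * (z - x)) ^ 2 * (s ^ 3 * (Y - 2) ^ 3) = - e3 * A * B).
  { transitivity (s ^ 3 * (Y - 2) * (s * (x * y + y * z + z * x) * (Y - 2)) ^ 2
      - 4 * (s * (x * y + y * z + z * x) * (Y - 2)) ^ 3 - 4 * s ^ 6 * e3 * (Y - 2) ^ 3
      + 18 * s ^ 3 * e3 * (Y - 2) ^ 2 * (s * (x * y + y * z + z * x) * (Y - 2))
      - 27 * e3 ^ 2 * s ^ 3 * (Y - 2) ^ 3); [unfold s, e3; ring|].
    rewrite Hrel; unfold A, B; ring. }
  assert (He3 : 0 < e3) by (unfold e3; repeat apply Rmult_lt_0_compat; lra).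
  assert (HsY : 0 < s ^ 3 * (Y - 2) ^ 3) by (apply Rmult_lt_0_compat; apply pow_lt; unfold s; lra).
  assert (HL : 0 <= ((x - y) * (y - z) * (z - x)) ^ 2 * (s ^ 3 * (Y - 2) ^ 3))
    by (apply Rmult_le_pos; [apply pow2_ge_0|lra]).
  split.
  - destruct (Rle_lt_dec 0 A) as [|HA]; [assumption|exfalso].
    assert (Hpoly : 0 <= Y * (Y - 4) ^ 3) by (apply Rmult_le_pos; [lra|apply pow_le; lra]).
    assert (HB : (Y - 2) * B < 0).
    { replace ((Y - 2) * B) with (4 * (s ^ 3 * (Y - 2) ^ 2) - (Y + 2) ^ 3 * (Y - 2) * e3)
        by (unfold B; ring).
      assert (E : 16 * (Y - 1) ^ 3 - (Y + 2) ^ 3 * (Y - 2) = - (Y * (Y - 4) ^ 3)) by ring.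
      unfold A in HA; nra. }
    assert (0 < A * B) by nra.
    rewrite HD in HL; nra.
  - intros HA0; rewrite HA0 in HD.
    assert (H0 : ((x - y) * (y - z) * (z - x)) ^ 2 = 0).
    { apply (Rmult_eq_reg_r (s ^ 3 * (Y - 2) ^ 3)); [rewrite HD|]; lra. }
    simpl in H0; nra.
Qed.

Lemma isosceles_bound x y z v : 0 < x -> 0 < y -> 0 < z -> 1 <= v -> ravi_q x y z = qv v ->
  sigma_iso v <= ravi_sigma x y z /\
  (ravi_sigma x y z = sigma_iso v -> (x - y) * (y - z) * (z - x) = 0).
Proof.
  intros Hx Hy Hz Hv Hq.
  set (Y := 3 * v ^ 2 + 1).
  assert (HY : 4 <= Y) by (unfold Y; nra).
  assert (He3 : 0 < x * y * z) by (repeat apply Rmult_lt_0_compat; lra).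
  assert (HP : 0 < (x + y) * (y + z) * (z + x)) by (repeat apply Rmult_lt_0_compat; lra).
  assert (Hrel : (x + y + z) * (x * y + y * z + z * x) * (Y - 2) = x * y * z * (Y + 2) * (Y - 1)).
  { unfold ravi_q, qv in Hq; fold Y in Hq.
    replace (3 * v ^ 2 - 1) with (Y - 2) in Hq by (unfold Y; ring).
    apply (Rmult_eq_compat_r ((x + y) * (y + z) * (z + x) * Y ^ 2)) in Hq.
    field_simplify in Hq; [|lra|lra].
    replace ((x + y) * (y + z) * (z + x)) with
      ((x + y + z) * (x * y + y * z + z * x) - x * y * z) in Hq by ring.
    nra. }
  destruct (cubic_disc_bound x y z Y Hx Hy Hz HY Hrel) as [HA HA0].
  destruct (ravi_sigma_spec x y z Hx Hy Hz) as [Hs Hs2].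
  destruct (sigma_iso_spec v Hv) as [Hi Hi2].
  assert (Hdiff : ravi_sigma x y z ^ 2 - sigma_iso v ^ 2
    = ((x + y + z) ^ 3 * (Y - 2) ^ 2 - 4 * (Y - 1) ^ 3 * (x * y * z)) / (x * y * z * (Y - 2) ^ 2)).
  { rewrite Hs2, Hi2; unfold Y; field; nra. }
  assert (HYp : 0 < x * y * z * (Y - 2) ^ 2) by (apply Rmult_lt_0_compat; [lra|apply pow_lt; lra]).
  split.
  - assert (0 <= ravi_sigma x y z ^ 2 - sigma_iso v ^ 2)
      by (rewrite Hdiff; apply Rmult_le_pos; [lra|apply Rlt_le, Rinv_0_lt_compat; lra]).
    nra.
  - intros E; apply HA0.
    apply (pos_eq_iff_sq _ _ Hs Hi) in E.
    assert (E' : ravi_sigma x y z ^ 2 - sigma_iso v ^ 2 = 0) by lra.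
    rewrite Hdiff in E'; apply Rmult_integral in E' as [|E']; [assumption|].
    exfalso; pose proof (Rinv_0_lt_compat _ HYp); lra.
Qed.

Lemma isosceles_extremal_iff x z t : 0 < x -> 0 < z -> 1/2 < t < 3/5 ->
  (ravi_q x x z = qv (v_of_t t) /\ ravi_sigma x x z = sigma_iso (v_of_t t))
  <-> x * (1 - t) = t * z.
Proof.
  intros Hx Hz Ht.
  destruct (v_of_t_spec t Ht) as [Hw Hw2]; set (w := v_of_t t) in *.
  assert (Hqw : qv w = 4 * t * (1 - t)) by (unfold qv; rewrite Hw2; field; lra).
  destruct (sigma_iso_spec w ltac:(lra)) as [Hi Hi2].
  assert (Hi2' : sigma_iso w ^ 2 = (1 + t) ^ 3 / ((1 - t) * t ^ 2)).
  { rewrite Hi2; replace (108 * w ^ 6) with (4 * (3 * w ^ 2) ^ 3) by ring.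
    rewrite Hw2; field; split; lra. }
  destruct (ravi_sigma_spec x x z Hx Hx Hz) as [Hs Hs2].
  rewrite (pos_eq_iff_sq _ _ Hs Hi), Hs2, Hi2', Hqw; unfold ravi_q.
  replace (x + x + z) with (2 * x + z) by ring.
  (* the two isosceles triangles with 2r/R = 4t(1-t): base-to-leg ratios 2t and 2(1-t) *)
  assert (Hq : 8 * (x * x * z) / ((x + x) * (x + z) * (z + x)) = 4 * t * (1 - t)
              <-> (x * (1 - t) - t * z) * (x * t - (1 - t) * z) = 0).
  { replace (8 * (x * x * z) / ((x + x) * (x + z) * (z + x)))
      with (4 * t * (1 - t) - 4 * ((x * (1 - t) - t * z) * (x * t - (1 - t) * z)) / (x + z) ^ 2)
      by (field; lra).
    assert (0 < (x + z) ^ 2) by (apply pow_lt; lra).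
    split; intros E; [|rewrite E; field; lra].
    apply (Rmult_eq_reg_r (/ (x + z) ^ 2)); [lra|apply Rgt_not_eq, Rinv_0_lt_compat; lra]. }
  rewrite Hq; split.
  - intros [E1 E2]; apply Rmult_integral in E1 as [|E1]; [lra|exfalso].
    assert (Ez : z = x * t / (1 - t)).
    { apply (Rmult_eq_reg_r (1 - t)); [|lra]; unfold Rdiv; rewrite Rmult_assoc, Rinv_l; lra. }
    rewrite Ez in E2.
    replace ((2 * x + x * t / (1 - t)) ^ 3 / (x * x * (x * t / (1 - t))))
      with ((1 + t) ^ 3 / ((1 - t) * t ^ 2) + (2 * t - 1) ^ 3 / ((1 - t) ^ 2 * t ^ 2)) in E2
      by (field; repeat split; lra).
    assert (0 < (2 * t - 1) ^ 3 / ((1 - t) ^ 2 * t ^ 2))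
      by (apply Rdiv_lt_0_compat; [apply pow_lt|apply Rmult_lt_0_compat; apply pow_lt]; lra).
    lra.
  - intros E; split; [rewrite E; ring|].
    assert (Ez : z = x * (1 - t) / t).
    { apply (Rmult_eq_reg_r t); [|lra]; unfold Rdiv; rewrite Rmult_assoc, Rinv_l; lra. }
    rewrite Ez; field; repeat split; nra.
Qed.

Lemma defect_decomp k k0 x y z v : 1 <= v -> ravi_q x y z = qv v ->
  ravi_sigma x y z - (3 * sqrt 3 + k * (1 - ravi_q x y z ^ 5))
  = (ravi_sigma x y z - sigma_iso v) + (v - 1) ^ 2 * iso_weight v * (sqrt 3 * phi v - k0)
    + (k0 - k) * (1 - ravi_q x y z ^ 5).
Proof.
  intros Hv Hq; pose proof (sigma_iso_decomp k0 v Hv); rewrite Hq; lra.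
Qed.

Lemma ravi_equilateral x : 0 < x -> ravi_q x x x = 1 /\ ravi_sigma x x x = 3 * sqrt 3.
Proof.
  intros Hx; split; [unfold ravi_q; field; lra|].
  destruct (ravi_sigma_spec x x x Hx Hx Hx) as [Hs Hs2].
  apply (pos_eq_iff_sq _ _ Hs); [apply Rmult_lt_0_compat; [lra|apply sqrt_lt_R0; lra]|].
  rewrite Hs2; replace ((3 * sqrt 3) ^ 2) with (9 * (sqrt 3 * sqrt 3)) by ring.
  rewrite sqrt_sqrt by lra; field; lra.
Qed.

Lemma one_sub_pow5 q : 0 < q <= 1 -> 0 <= 1 - q ^ 5 /\ (1 - q ^ 5 = 0 -> q = 1).
Proof.
  intros Hq; destruct (Req_dec q 1) as [->|Hne]; [split; [lra|auto]|].
  pose proof (pow_lt_1_compat q 5 ltac:(lra) ltac:(lia)); split; lra.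
Qed.

Definition ravi_extremal (t x y z : R) : Prop :=
  (x = y /\ x * (1 - t) = t * z) \/ (y = z /\ y * (1 - t) = t * x) \/
  (z = x /\ z * (1 - t) = t * y).

Lemma ravi_extremal_iff t x y z : 0 < x -> 0 < y -> 0 < z -> 1/2 < t < 3/5 ->
  ravi_extremal t x y z <->
  (x - y) * (y - z) * (z - x) = 0 /\ ravi_q x y z = qv (v_of_t t) /\
  ravi_sigma x y z = sigma_iso (v_of_t t).
Proof.
  intros Hx Hy Hz Ht.
  destruct (ravi_rot x y z) as [Q1 S1]; destruct (ravi_rot y z x) as [Q2 S2].
  split.
  - intros [[-> E]|[[-> E]|[-> E]]]; (split; [ring|]).
    + now apply isosceles_extremal_iff.
    + rewrite Q1, S1; now apply isosceles_extremal_iff.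
    + rewrite Q1, S1, Q2, S2; now apply isosceles_extremal_iff.
  - intros [Hiso Hqs]; apply Rmult_integral in Hiso as [Hiso|Hiso];
      [apply Rmult_integral in Hiso as [Hiso|Hiso]|].
    + left; assert (x = y) as <- by lra; split; [reflexivity|].
      now apply isosceles_extremal_iff.
    + right; left; assert (y = z) as <- by lra; split; [reflexivity|].
      rewrite Q1, S1 in Hqs; now apply isosceles_extremal_iff.
    + right; right; assert (z = x) as <- by lra; split; [reflexivity|].
      rewrite Q1, S1, Q2, S2 in Hqs; now apply isosceles_extremal_iff.
Qed.

Section Extremal.

Variables k0 t1 : R.
Hypothesis Hk0 : 1/2 < k0 < 9/13.
Hypothesis Hp4 : p4 k0 = 0.
Hypothesis Ht1 : 1/2 < t1 < 3/5.
Hypothesis Hp2 : p2 t1 = 0.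

Lemma k0_eq : k0 = sqrt 3 * phi (v_of_t t1).
Proof.
  destruct (v_of_t_spec t1 Ht1) as [Hw _]; pose proof (g_root_v_of_t t1 Ht1 Hp2) as Hg.
  set (w := v_of_t t1) in *.
  assert (HK : pev p4L (3 * phi w ^ 2) = 0)
    by (rewrite (phi_eq_psi_mod_g w) by (lra || assumption); now apply p4L_root_psi).
  pose proof (phi_gt_29_100 w ltac:(lra)).
  destruct (phi_strict_min w ltac:(lra) Hg (103/100) ltac:(lra)) as [Hle _].
  pose proof phi_103_bound.
  assert (Hsq : k0 ^ 2 = 3 * phi w ^ 2).
  { apply p4L_root_unique; [nra|nra| |exact HK]; now rewrite <- p4_pev. }
  assert (S3 : sqrt 3 * sqrt 3 = 3) by (apply sqrt_sqrt; lra).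
  pose proof (sqrt_lt_R0 3 ltac:(lra)).
  assert (F : (k0 - sqrt 3 * phi w) * (k0 + sqrt 3 * phi w) = 0) by nra.
  apply Rmult_integral in F as [|F]; [lra|nra].
Qed.

Lemma phi_term_nonneg v : 1 <= v ->
  0 <= (v - 1) ^ 2 * iso_weight v * (sqrt 3 * phi v - k0) /\
  ((v - 1) ^ 2 * iso_weight v * (sqrt 3 * phi v - k0) = 0 -> v = 1 \/ v = v_of_t t1).
Proof.
  intros Hv; destruct (v_of_t_spec t1 Ht1) as [Hw _].
  destruct (phi_strict_min (v_of_t t1) ltac:(lra) (g_root_v_of_t t1 Ht1 Hp2) v Hv)
    as [Hmin Hmin_eq].
  pose proof (iso_weight_pos v Hv); pose proof (sqrt_lt_R0 3 ltac:(lra)).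
  rewrite k0_eq; split.
  - apply Rmult_le_pos; [apply Rmult_le_pos; [apply pow2_ge_0|lra]|nra].
  - intros E; apply Rmult_integral in E as [E|E]; [apply Rmult_integral in E as [E|E]|].
    + left; simpl in E; nra.
    + lra.
    + right; apply Hmin_eq; nra.
Qed.

Lemma ravi_inequality k x y z : k <= k0 -> 0 < x -> 0 < y -> 0 < z ->
  3 * sqrt 3 + k * (1 - ravi_q x y z ^ 5) <= ravi_sigma x y z /\
  (ravi_sigma x y z = 3 * sqrt 3 + k * (1 - ravi_q x y z ^ 5) <->
   (x = y /\ y = z) \/ (k = k0 /\ ravi_extremal t1 x y z)).
Proof.
  intros Hk Hx Hy Hz.
  destruct (ravi_q_bounds x y z Hx Hy Hz) as [Hq Hq1].
  pose proof (one_sub_pow5 _ Hq) as Hq5.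
  destruct (exists_qv _ Hq) as [v [Hv Hqv]].
  destruct (isosceles_bound x y z v Hx Hy Hz Hv Hqv) as [HT1 HT1_eq].
  destruct (phi_term_nonneg v Hv) as [HT2 HT2_eq].
  pose proof (defect_decomp k k0 x y z v Hv Hqv) as Hdec.
  assert (HT3 : 0 <= (k0 - k) * (1 - ravi_q x y z ^ 5)) by (apply Rmult_le_pos; lra).
  split; [lra|split].
  - intros E.
    assert (T3 : (k0 - k) * (1 - ravi_q x y z ^ 5) = 0) by lra.
    apply Rmult_integral in T3 as [T3|T3]; [|left; now apply Hq1, Hq5].
    destruct (HT2_eq ltac:(lra)) as [-> | ->].
    + left; apply Hq1; rewrite Hqv; unfold qv; field.
    + right; split; [lra|].
      apply ravi_extremal_iff; auto; repeat split; [apply HT1_eq| |]; lra.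
  - intros [[<- <-]|[-> Hext]].
    + destruct (ravi_equilateral x Hx) as [-> ->]; ring.
    + apply ravi_extremal_iff in Hext as [_ [Hqw Hsw]]; auto.
      destruct (v_of_t_spec t1 Ht1) as [Hw _].
      pose proof (defect_decomp k0 k0 x y z (v_of_t t1) ltac:(lra) Hqw) as E.
      rewrite Hsw, <- k0_eq in E; lra.
Qed.

End Extremal.

Lemma ravi_substitution a b c : is_triangle a b c ->
  exists x y z, 0 < x /\ 0 < y /\ 0 < z /\ a = y + z /\ b = z + x /\ c = x + y.
Proof.
  intros (Ha & Hb & Hc & H1 & H2 & H3).
  exists ((b + c - a) / 2), ((c + a - b) / 2), ((a + b - c) / 2); repeat split; lra.
Qed.

Lemma ravi_triangle_invariants x y z : 0 < x -> 0 < y -> 0 < z ->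
  let r := inradius (y + z) (z + x) (x + y) in
  0 < r /\ semiper (y + z) (z + x) (x + y) = ravi_sigma x y z * r /\
  2 * r / circumradius (y + z) (z + x) (x + y) = ravi_q x y z.
Proof.
  intros Hx Hy Hz r.
  assert (Hs : semiper (y + z) (z + x) (x + y) = x + y + z) by (unfold semiper; field).
  assert (HA : area (y + z) (z + x) (x + y) = sqrt ((x + y + z) * x * y * z)).
  { unfold area; cbv zeta; rewrite Hs; f_equal; ring. }
  assert (HP : 0 < (x + y + z) * x * y * z) by (repeat apply Rmult_lt_0_compat; lra).
  pose proof (sqrt_lt_R0 _ HP) as HA0; pose proof (sqrt_sqrt _ (Rlt_le _ _ HP)) as HA2.
  unfold r, inradius, circumradius, ravi_sigma, ravi_q; rewrite Hs, HA.
  repeat split.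
  - apply Rdiv_lt_0_compat; lra.
  - field; lra.
  - replace (2 * (sqrt ((x + y + z) * x * y * z) / (x + y + z)) /
      ((y + z) * (z + x) * (x + y) / (4 * sqrt ((x + y + z) * x * y * z))))
      with (8 * (sqrt ((x + y + z) * x * y * z) * sqrt ((x + y + z) * x * y * z))
            / ((x + y + z) * ((y + z) * (z + x) * (x + y)))) by (field; repeat split; lra).
    rewrite HA2; field; repeat split; lra.
Qed.

Lemma ratio_2t11_ravi t x y z :
  ratio_2t11 t (y + z) (z + x) (x + y) <-> ravi_extremal t x y z.
Proof.
  unfold ratio_2t11, ravi_extremal; split.
  - intros [[E F]|[[E F]|[E F]]].
    + right; left; assert (z = y) as -> by lra; split; [reflexivity|lra].
    + right; right; assert (z = x) as -> by lra; split; [reflexivity|lra].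
    + left; assert (y = x) as -> by lra; split; [reflexivity|lra].
  - intros [[<- E]|[[<- E]|[<- E]]].
    + right; right; split; lra.
    + left; split; lra.
    + right; left; split; lra.
Qed.

Theorem theorem2 (k0 t1 : R) :
  1/2 < k0 < 9/13 -> p4 k0 = 0 ->
  1/2 < t1 < 3/5 -> p2 t1 = 0 ->
  forall k : R, k <= k0 ->
  forall a b c : R, is_triangle a b c ->
    let p := semiper a b c in
    let r := inradius a b c in
    let RR := circumradius a b c in
    p >= 3 * sqrt 3 * r + k * (1 - (2 * r / RR) ^ 5) * r /\
    (p = 3 * sqrt 3 * r + k * (1 - (2 * r / RR) ^ 5) * r <->
       (a = b /\ b = c) \/ (k = k0 /\ ratio_2t11 t1 a b c)).
Proof.
  intros Hk0 Hp4 Ht1 Hp2 k Hk a b c Htri; cbv zeta.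
  destruct (ravi_substitution a b c Htri) as (x & y & z & Hx & Hy & Hz & -> & -> & ->).
  destruct (ravi_triangle_invariants x y z Hx Hy Hz) as (Hr & -> & ->).
  destruct (ravi_inequality k0 t1 Hk0 Hp4 Ht1 Hp2 k x y z Hk Hx Hy Hz) as [Hle Heq].
  set (r := inradius (y + z) (z + x) (x + y)) in *.
  set (L := 3 * sqrt 3 + k * (1 - ravi_q x y z ^ 5)) in *.
  replace (3 * sqrt 3 * r + k * (1 - ravi_q x y z ^ 5) * r) with (L * r) by (unfold L; ring).
  split; [apply Rle_ge, Rmult_le_compat_r; lra|].
  assert (Hcancel : ravi_sigma x y z * r = L * r <-> ravi_sigma x y z = L)
    by (split; [intros E; apply Rmult_eq_reg_r in E; lra|intros ->; reflexivity]).
  rewrite Hcancel, Heq, ratio_2t11_ravi.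
  split; (intros [[E F]|H]; [left; split; lra|right; exact H]).
Qed.
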